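(* Let $\hat q$, $\hat q_\lambda$ be as defined in the context, with $\lambda>0$, and let $\mathcal{C}(x)=\{y\in[C]: s(x,y)\le \hat q\}$ and $\mathcal{C}_\lambda(x)=\{y\in[C]: s_\lambda(x,y)\le\hat q_\lambda\}$. Let $\mathcal{Y}_1(x):=\{y\in[C]: d(y,\hat y(x))\neq 0\}$. Then for every $x$, $$\mathcal{C}_\lambda(x)\cap\mathcal{Y}_1(x)\subseteq \mathcal{C}(x)\cap \mathcal{Y}_1(x).$$
   Context: Classification with $C$ classes, labels in $[C]=\{1,\dots,C\}$. A classifier outputs a softmax vector $\hat\pi(x)\in\mathbb{R}^C$ and predicted class $\hat y(x)=\arg\max_i \hat\pi_i(x)$. A map $g:[C]\to[G]$ partitions the classes into $G$ groups. Define $d(y,y'):=\mathbb{I}\{g(y)\neq g(y')\}$. Given any real-valued score function $s(x,y)$ and $\lambda>0$, define the penalized score $s_\lambda(x,y):=s(x,y)+\lambda\, d(y,\hat y(x))$. Given a calibration set $\{(x_i,y_i)\}_{i=1}^n$ and $\alpha\in(0,1)$ with $\lceil (n+1)(1-\alpha)\rceil\le n$, $\hat q$ (resp. $\hat q_\lambda$) is the $\lceil (n+1)(1-\alpha)\rceil$-th smallest value of $\{s(x_i,y_i)\}_{i=1}^n$ (resp. $\{s_\lambda(x_i,y_i)\}_{i=1}^n$). *)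

From mathcomp Require Import all_boot all_order all_algebra.
From mathcomp Require Import reals.
Set Implicit Arguments. Unset Strict Implicit. Unset Printing Implicit Defensive.
Import Order.TTheory GRing.Theory Num.Theory.
Local Open Scope ring_scope.

Section Conformal.
Variables (R : realType) (X : Type) (K G : nat).
(* Classes [C] are represented by 'I_K.+1, i.e. C = K+1 >= 1 classes. *)
Notation cls := 'I_K.+1.

Definition yhat (pi : X -> cls -> R) (x : X) : cls :=
  [arg max_(i > ord0) pi x i]%O.

Definition gdist (g : cls -> 'I_G) (y y' : cls) : R := (g y != g y')%:R.

Definition pen_score (pi : X -> cls -> R) (g : cls -> 'I_G) (s : X -> cls -> R)
  (lambda : R) (x : X) (y : cls) : R :=
  s x y + lambda * gdist g y (yhat pi x).

Definition qidx (n : nat) (alpha : R) : nat :=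
  `| Num.ceil ((n.+1)%:R * (1 - alpha)) |%N.

(* k-th smallest (k >= 1) value of the calibration scores *)
Definition kth_smallest (n : nat) (k : nat) (v : 'I_n -> R) : R :=
  nth 0 (sort <=%R [seq v i | i <- enum 'I_n]) k.-1.

Definition qhat (n : nat) (alpha : R) (s : X -> cls -> R)
  (xs : 'I_n -> X) (ys : 'I_n -> cls) : R :=
  @kth_smallest n (qidx n alpha) (fun i => s (xs i) (ys i)).

Definition pred_set (s : X -> cls -> R) (q : R) (x : X) : {set cls} :=
  [set y | s x y <= q].

Definition Y1 (pi : X -> cls -> R) (g : cls -> 'I_G) (x : X) : {set cls} :=
  [set y | gdist g y (yhat pi x) != 0].

End Conformal.

(* On Y_1(x) the penalty is exactly lambda, so y lies in C_lambda(x) iff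
   s(x,y) + lambda <= q_lambda.  Since d <= 1, the penalized calibration
   scores are pointwise at most the original ones plus lambda; order
   statistics are monotone and shift with translation, hence
   q_lambda <= q + lambda and s(x,y) <= q. *)
From mathcomp Require Import all_boot all_order all_algebra.
From mathcomp Require Import reals.
Import Order.TTheory GRing.Theory Num.Theory.
Local Open Scope ring_scope.

Section SortedCount.
Context {d : Order.disp_t} {T : orderType d} (x0 : T).
Implicit Types (l : seq T) (t : T).

Lemma sorted_nth_le_count l j t : sorted <=%O l ->
  (j < count (<= t)%O l)%N -> (nth x0 l j <= t)%O.
Proof.
move=> sorted_l j_lt_cnt; rewrite leNgt; apply/negP => t_lt_nth.
have : ~~ has (<= t)%O (drop j l).
  apply/hasP => -[y /(nthP x0) [k k_lt <-]]; rewrite nth_drop => le_t.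
  have jk_lt : (j + k < size l)%N by rewrite -ltn_subRL -size_drop.
  have le_nth : (nth x0 l j <= nth x0 l (j + k))%O.
    apply: (sorted_leq_nth le_trans lexx) => //; rewrite ?inE ?leq_addr //.
    exact: leq_ltn_trans (leq_addr k j) jk_lt.
  by move: (le_trans le_nth le_t); rewrite leNgt t_lt_nth.
rewrite has_count -leqNgt leqn0 => /eqP cnt_drop.
move: j_lt_cnt; rewrite -(cat_take_drop j l) count_cat cnt_drop addn0.
move/leq_trans/(_ (count_size _ _)).
by rewrite size_take_min ltnNge geq_minl.
Qed.

Lemma sorted_count_le_nth l j : sorted <=%O l -> (j < size l)%N ->
  (j < count (<= nth x0 l j)%O l)%N.
Proof.
move=> sorted_l j_lt.
have size_take : size (take j.+1 l) = j.+1 := size_takel j_lt.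
have : all (<= nth x0 l j)%O (take j.+1 l).
  apply/(all_nthP x0) => k; rewrite size_take => k_lt; rewrite nth_take //.
  by apply: (sorted_leq_nth le_trans lexx) => //; rewrite inE (leq_trans k_lt).
rewrite all_count size_take => /eqP cnt_take.
by rewrite -[X in count _ X](cat_take_drop j.+1 l) count_cat cnt_take addSn ltnS leq_addr.
Qed.

End SortedCount.

Section OrderStatistics.
Context {R : realType} {n : nat}.
Implicit Types (v w : 'I_n -> R) (k : nat).

Lemma size_sort_scores v : size (sort <=%R [seq v i | i <- enum 'I_n]) = n.
Proof. by rewrite size_sort size_map size_enum_ord. Qed.

Lemma count_sort_scores v (P : pred R) :
  count P (sort <=%R [seq v i | i <- enum 'I_n]) = count (P \o v) (enum 'I_n).
Proof. by rewrite (permP (permEl (perm_sort _ _))) count_map. Qed.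

Lemma kth_smallest_le_homo k v w : (forall i, v i <= w i) ->
  kth_smallest k v <= kth_smallest k w.
Proof.
move=> le_vw; rewrite /kth_smallest.
have [k_lt | k_ge] := ltnP k.-1 n; last first.
  by rewrite !nth_default ?size_sort_scores.
apply: sorted_nth_le_count; first exact: (sort_sorted le_total).
have := sorted_count_le_nth 0 _ k.-1 (sort_sorted le_total [seq w i | i <- enum 'I_n]).
rewrite size_sort_scores => /(_ k_lt); rewrite !count_sort_scores.
by move/leq_trans; apply; apply: sub_count => i /= /(le_trans (le_vw i)).
Qed.

(* [0 <= c] covers an out-of-range index, where both sides default to [0]. *)
Lemma kth_smallest_addr k v c : 0 <= c ->
  kth_smallest k (fun i => v i + c) <= kth_smallest k v + c.
Proof.
move=> c_ge0; rewrite /kth_smallest (map_comp (+%R^~ c) v).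
rewrite -(map_sort (leT' := <=%R)); last by move=> a b; rewrite lerD2r.
have [k_lt | k_ge] := ltnP k.-1 n; first by rewrite (nth_map 0) ?size_sort_scores.
by rewrite !nth_default ?size_map ?size_sort_scores ?add0r.
Qed.

End OrderStatistics.

Section PenalizedScore.
Context {R : realType} {X : Type} {K G : nat}.
Variables (pi : X -> 'I_K.+1 -> R) (g : 'I_K.+1 -> 'I_G) (s : X -> 'I_K.+1 -> R).
Variable lambda : R.
Hypothesis lambda_ge0 : 0 <= lambda.

Lemma gdist_le1 y y' : gdist R g y y' <= 1.
Proof. by rewrite /gdist; case: (_ != _). Qed.

Lemma gdist_eq1 y y' : gdist R g y y' != 0 -> gdist R g y y' = 1.
Proof. by rewrite /gdist; case: (g y != g y'); rewrite ?eqxx. Qed.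

Lemma pen_score_le x y : pen_score pi g s lambda x y <= s x y + lambda.
Proof. by rewrite lerD2l ler_piMr ?gdist_le1. Qed.

Lemma qhat_pen_score_le n alpha (xs : 'I_n -> X) (ys : 'I_n -> 'I_K.+1) :
  qhat alpha (pen_score pi g s lambda) xs ys <= qhat alpha s xs ys + lambda.
Proof.
rewrite /qhat; apply: le_trans _ (kth_smallest_addr _ _ _ lambda_ge0).
by apply: kth_smallest_le_homo => i; apply: pen_score_le.
Qed.

End PenalizedScore.

Theorem proposition1 (R : realType) (X : Type) (K G : nat)
  (pi : X -> 'I_K.+1 -> R) (g : 'I_K.+1 -> 'I_G) (s : X -> 'I_K.+1 -> R)
  (lambda : R) (hlambda : 0 < lambda)
  (n : nat) (xs : 'I_n -> X) (ys : 'I_n -> 'I_K.+1)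
  (alpha : R) (halpha : 0 < alpha < 1) (hn : (qidx n alpha <= n)%N)
  (x : X) :
  let q := qhat alpha s xs ys in
  let ql := qhat alpha (pen_score pi g s lambda) xs ys in
  (pred_set (pen_score pi g s lambda) ql x :&: Y1 pi g x
     \subset pred_set s q x :&: Y1 pi g x).
Proof.
cbv zeta; apply/subsetP => y; rewrite !inE => /andP [y_in_pen y_in_Y1].
rewrite y_in_Y1 andbT -(lerD2r lambda).
rewrite /pen_score (gdist_eq1 _ _ _ y_in_Y1) mulr1 in y_in_pen.
apply: le_trans y_in_pen _; apply: qhat_pen_score_le; exact: ltW.
Qed.
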